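(* For every integer $n\ge 2$, $$\operatorname{op}_{n,n-1}(123) = (n-1)\,\operatorname{op}_{[2,\underbrace{1,\dots,1}_{n-2}]}(123).$$
   Context: An ordered set partition of $[N]$ into $k$ blocks is a sequence $B_1/B_2/\cdots/B_k$ of nonempty, pairwise disjoint subsets of $[N]$ whose union is $[N]$; the order of the blocks matters, but not the order of elements within a block. For a permutation $\rho=\rho_1\cdots\rho_m\in\mathcal{S}_m$, an ordered partition $B_1/\cdots/B_k$ contains $\rho$ if there are block indices $i_1<i_2<\cdots<i_m$ and elements $b_j\in B_{i_j}$ such that $b_1\cdots b_m$ is order-isomorphic to $\rho$; otherwise it avoids $\rho$. $\operatorname{op}_{n,k}(\rho)$ is the number of $\rho$-avoiding ordered partitions of $[n]$ into $k$ blocks, and for positive integers $b_1,\dots,b_k$, $\operatorname{op}_{[b_1,\dots,b_k]}(\rho)$ is the number of $\rho$-avoiding ordered partitions $B_1/\cdots/B_k$ of $[b_1+\cdots+b_k]$ with $|B_i|=b_i$ for all $i$. *)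

From mathcomp Require Import all_boot all_fingroup.
Set Implicit Arguments.
Unset Strict Implicit.
Unset Printing Implicit Defensive.

(* [N] is modelled by 'I_N = {0,...,N-1} (only the order matters).
   An ordered set partition B_1/.../B_k of [N] into k blocks is a
   k-indexed family of subsets B : {ffun 'I_k -> {set 'I_N}}. *)
Definition is_osp (N k : nat) (B : {ffun 'I_k -> {set 'I_N}}) : bool :=
  [&& [forall i, B i != set0],
      [forall i, forall j, (i != j) ==> [disjoint B i & B j]] &
      (\bigcup_(i < k) B i == [set: 'I_N])].

Definition osp_contains (N k m : nat) (B : {ffun 'I_k -> {set 'I_N}})
  (rho : {perm 'I_m}) : bool :=
  [exists idx : {ffun 'I_m -> 'I_k}, exists b : {ffun 'I_m -> 'I_N},
    [&& [forall j : 'I_m, forall j' : 'I_m, (j < j') ==> (idx j < idx j')],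
        [forall j : 'I_m, b j \in B (idx j)] &
        [forall j : 'I_m, forall j' : 'I_m,
           (b j < b j') == (rho j < rho j')]]].

Definition osp_avoids (N k m : nat) (B : {ffun 'I_k -> {set 'I_N}})
  (rho : {perm 'I_m}) : bool := ~~ osp_contains B rho.

Definition op (n k m : nat) (rho : {perm 'I_m}) : nat :=
  #|[set B : {ffun 'I_k -> {set 'I_n}} | is_osp B && osp_avoids B rho]|.

Definition op_sizes (bs : seq nat) (m : nat) (rho : {perm 'I_m}) : nat :=
  #|[set B : {ffun 'I_(size bs) -> {set 'I_(sumn bs)}} |
      [&& is_osp B, osp_avoids B rho &
          [forall i : 'I_(size bs), #|B i| == nth 0 bs i]]]|.

Definition p123 : {perm 'I_3} := 1%g.

(* An ordered partition of [n] into n-1 blocks has exactly one block of size 2,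
   so op_{n,n-1}(123) is the sum, over the positions j of that block, of the
   number of 123-avoiders with their doubleton at j.  These numbers do not depend
   on j: for adjacent positions j, j+1 let U be the 3-element union of the two
   blocks and c the element of the singleton; moving the doubleton to j+1 and
   keeping at j the element of U of rank rank(c) + 2 mod 3 preserves avoidance,
   and the inverse move uses the rank shift 1.  Position 0 is counted by
   op_{[2,1,...,1]}(123). *)

From mathcomp Require Import all_boot all_fingroup zify.
Set Implicit Arguments. Unset Strict Implicit. Unset Printing Implicit Defensive.

Lemma card_bigcup_disjoint (T I : finType) (F : I -> {set T}) :
  (forall i j x, x \in F i -> x \in F j -> i = j) ->
  #|\bigcup_i F i| = \sum_i #|F i|.
Proof.
move=> F_disj; rewrite -sum1_card big_mkcond /=.
under [RHS]eq_bigr => i _ do rewrite -sum1_card big_mkcond /=.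
rewrite [RHS]exchange_big /=; apply: eq_bigr => x _.
case: ifP => [/bigcupP [i _ xFi] | xF].
- rewrite (bigD1 i) //= xFi big1 // => j ji.
  by case: ifP => // xFj; rewrite (F_disj _ _ _ xFj xFi) eqxx in ji.
- by rewrite big1 // => i _; case: ifP => // xFi; move/negbT: xF => /bigcupP []; exists i.
Qed.

Lemma sum_nat_eq1 (I : finType) (F : I -> nat) :
  \sum_i F i = 1 -> exists j, forall l, F l = (l == j).
Proof.
move=> F1; have [j Fj] : exists j, 0 < F j.
  case: (pickP (fun j => 0 < F j)) => [j Fj | F0]; first by exists j.
  by move: F1; rewrite big1 // => i _; move: (F0 i); rewrite lt0n => /negbFE/eqP.
exists j => l; move: F1; rewrite (bigD1 j) //= => F1.
have rest0 : \sum_(i | i != j) F i == 0 by lia.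
case: (eqVneq l j) => [->|lj]; first by move/eqP: rest0 F1 => ->; rewrite addn0.
by move: rest0; rewrite sum_nat_eq0 => /forallP /(_ l) /implyP /(_ lj) /eqP.
Qed.

Section Rank.
Variable N : nat.
Implicit Types (U : {set 'I_N}) (u v : 'I_N).

Definition rank U u := #|[set v in U | v < u]|.

Lemma rank_lt U u v : u \in U -> u < v -> rank U u < rank U v.
Proof.
move=> uU uv; apply: proper_card; apply/properP; split.
  by apply/subsetP => w; rewrite !inE => /andP [-> /ltn_trans ->].
by exists u; rewrite !inE ?uU ?uv // ltnn andbF.
Qed.

Lemma rank_lt_card U u : u \in U -> rank U u < #|U|.
Proof.
move=> uU; apply: proper_card; apply/properP; split.
  by apply/subsetP => v; rewrite inE => /andP [].
by exists u; rewrite // inE ltnn andbF.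
Qed.

Lemma rank_ltE U u v : u \in U -> v \in U -> (rank U u < rank U v) = (u < v).
Proof.
move=> uU vU; case: (ltngtP u v) => [uv|vu|/val_inj ->]; last by rewrite !ltnn.
- exact: rank_lt.
- by apply/negbTE; rewrite -leqNgt ltnW // rank_lt.
Qed.

Lemma rank_leE U u v : u \in U -> v \in U -> (rank U u <= rank U v) = (u <= v).
Proof. by move=> uU vU; rewrite leqNgt [(u <= v)%N]leqNgt rank_ltE. Qed.

Lemma rank_inj U : {in U &, injective (rank U)}.
Proof.
move=> u v uU vU ruv; apply: val_inj; apply/eqP.
by rewrite eqn_leq -(rank_leE uU vU) -(rank_leE vU uU) ruv leqnn.
Qed.

Lemma rank_onto U r : r < #|U| -> exists2 u, u \in U & rank U u = r.
Proof.
move=> rU.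
have uniq_ranks : uniq [seq rank U u | u <- enum U].
  by rewrite map_inj_in_uniq ?enum_uniq // => u v; rewrite !mem_enum; apply: rank_inj.
have ranks_small : {subset [seq rank U u | u <- enum U] <= iota 0 #|U|}.
  by move=> _ /mapP [u uU ->]; rewrite mem_iota rank_lt_card // -mem_enum.
have [|_ ranks_iota] := uniq_min_size uniq_ranks ranks_small.
  by rewrite size_iota size_map cardE.
have : r \in iota 0 #|U| by rewrite mem_iota.
by rewrite -ranks_iota => /mapP [u uU ->]; exists u; rewrite -1?mem_enum.
Qed.

Definition rotate U s u :=
  odflt u [pick v in U | rank U v == (rank U u + s) %% #|U|].

Lemma rotate_spec U s u : u \in U ->
  rotate U s u \in U /\ rank U (rotate U s u) = (rank U u + s) %% #|U|.
Proof.
move=> uU; have U_gt0 : 0 < #|U| by apply/card_gt0P; exists u.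
have [v vU rv] := rank_onto (ltn_pmod (rank U u + s) U_gt0).
rewrite /rotate; case: pickP => [w /andP [wU /eqP rw] | none] //=.
by move: (none v); rewrite vU rv eqxx.
Qed.

Lemma rotateK U s t u : s + t = #|U| -> u \in U -> rotate U t (rotate U s u) = u.
Proof.
move=> st uU; have [su rsu] := rotate_spec s uU.
have [tsu rtsu] := rotate_spec t su.
apply: (rank_inj tsu uU); rewrite rtsu rsu modnDml -addnA st modnDr.
by rewrite modn_small // rank_lt_card.
Qed.

End Rank.

Section OrderedSetPartitions.
Variables N k : nat.
Implicit Types (B : {ffun 'I_k -> {set 'I_N}}) (i j l : 'I_k).

Lemma is_ospP B : is_osp B <->
  [/\ forall i, B i != set0,
      forall i j x, x \in B i -> x \in B j -> i = j &
      forall x, exists i, x \in B i].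
Proof.
split.
- case/and3P => /forallP nonempty /forallP disj /eqP cover; split => //.
  + move=> i j x xi xj; case: (eqVneq i j) => // ij.
    by have := forallP (disj i) j; rewrite ij => /(disjointFr)/(_ xi); rewrite xj.
  + move=> x; have /bigcupP [i _ xi] : x \in \bigcup_i B i by rewrite cover inE.
    by exists i.
- case=> nonempty disj cover; apply/and3P; split.
  + exact/forallP.
  + apply/forallP => i; apply/forallP => j; apply/implyP => ij.
    rewrite -setI_eq0; apply/eqP/setP => x; rewrite !inE.
    by apply/negbTE/andP => -[xi xj]; rewrite (disj _ _ _ xi xj) eqxx in ij.
  + rewrite -subTset; apply/subsetP => x _.
    by have [i xi] := cover x; apply/bigcupP; exists i.
Qed.

Lemma osp_card_sum B : is_osp B -> \sum_i #|B i| = N.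
Proof.
case/is_ospP => _ disj cover; rewrite -card_bigcup_disjoint //.
have -> : \bigcup_i B i = setT.
  by apply/setP => x; rewrite inE; have [i xi] := cover x; apply/bigcupP; exists i.
by rewrite cardsT card_ord.
Qed.

Lemma osp_card_setU B i j : is_osp B -> i != j -> #|B i :|: B j| = #|B i| + #|B j|.
Proof.
case/is_ospP => _ disj _ ij; rewrite cardsU.
suff -> : B i :&: B j = set0 by rewrite cards0 subn0.
apply/setP => x; rewrite !inE; apply/negbTE/andP => -[xi xj].
by rewrite (disj _ _ _ xi xj) eqxx in ij.
Qed.

Definition has123 B := exists (i1 i2 i3 : 'I_k) (b1 b2 b3 : 'I_N),
  [/\ i1 < i2 < i3, b1 < b2 < b3 & [/\ b1 \in B i1, b2 \in B i2 & b3 \in B i3]].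

Lemma contains123P B : osp_contains B p123 <-> has123 B.
Proof.
split.
- case/existsP => idx /existsP [b /and3P [/forallP idx_inc /forallP b_in /forallP b_iso]].
  have idx_lt (s t : 'I_3) : s < t -> idx s < idx t by apply/implyP/(forallP (idx_inc s)).
  have b_lt (s t : 'I_3) : s < t -> b s < b t.
    by have /eqP -> := forallP (b_iso s) t; rewrite /p123 !perm1.
  pose o := @Ordinal 3.
  exists (idx (o 0 isT)), (idx (o 1 isT)), (idx (o 2 isT)).
  exists (b (o 0 isT)), (b (o 1 isT)), (b (o 2 isT)).
  by split; rewrite ?idx_lt ?b_lt ?b_in.
- case=> i1 [i2 [i3 [b1 [b2 [b3 [/andP [i12 i23] /andP [b12 b23] [bi1 bi2 bi3]]]]]]].
  apply/existsP; exists [ffun s : 'I_3 => nth i1 [:: i1; i2; i3] s].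
  apply/existsP; exists [ffun s : 'I_3 => nth b1 [:: b1; b2; b3] s].
  apply/and3P; split.
  + apply/forallP => -[[|[|[|?]]] ?] //; apply/forallP => -[[|[|[|?]]] ?] //=;
      rewrite !ffunE /=; lia.
  + by apply/forallP => -[[|[|[|?]]] ?] //; rewrite !ffunE.
  + apply/forallP => -[[|[|[|?]]] ?] //; apply/forallP => -[[|[|[|?]]] ?] //=;
      rewrite !ffunE /p123 !perm1 /=; apply/eqP; lia.
Qed.

Definition replace_blocks B i j (X Y : {set 'I_N}) : {ffun 'I_k -> {set 'I_N}} :=
  [ffun l => if l == i then X else if l == j then Y else B l].

Lemma replace_blocks_fst B i j X Y : replace_blocks B i j X Y i = X.
Proof. by rewrite ffunE eqxx. Qed.

Lemma replace_blocks_snd B i j X Y : i != j -> replace_blocks B i j X Y j = Y.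
Proof. by move=> ij; rewrite ffunE eq_sym (negbTE ij) eqxx. Qed.

Lemma replace_blocks_other B i j X Y l :
  l != i -> l != j -> replace_blocks B i j X Y l = B l.
Proof. by move=> li lj; rewrite ffunE (negbTE li) (negbTE lj). Qed.

Lemma replace_blocks_id B i j : replace_blocks B i j (B i) (B j) = B.
Proof.
by apply/ffunP => l; rewrite ffunE; case: ifP => [/eqP -> //|_]; case: ifP => // /eqP ->.
Qed.

Lemma replace_blocks_replace B i j X Y X' Y' :
  replace_blocks (replace_blocks B i j X Y) i j X' Y' = replace_blocks B i j X' Y'.
Proof. by apply/ffunP => l; rewrite !ffunE; case: (l == i) => //; case: (l == j). Qed.

Lemma replace_blocks_osp B i j X Y : is_osp B -> i != j ->
  X :|: Y = B i :|: B j -> [disjoint X & Y] -> X != set0 -> Y != set0 ->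
  is_osp (replace_blocks B i j X Y).
Proof.
case/is_ospP => nonempty disj cover ij XY dXY X0 Y0.
have off_pair x m : x \in X \/ x \in Y -> x \in B m -> m != i -> m != j -> False.
  move=> xXY xm; have : x \in B i :|: B j by rewrite -XY inE; case: xXY => ->; rewrite ?orbT.
  by rewrite inE => /orP [] x_ij; rewrite (disj _ _ _ x_ij xm) eqxx.
apply/is_ospP; split.
- by move=> l; rewrite ffunE; case: ifP => //; case: ifP.
- move=> l l' x; rewrite !ffunE.
  case: (eqVneq l i) => [->|li]; case: (eqVneq l' i) => [->|l'i] //.
  + case: (eqVneq l' j) => [-> xX xY|l'j xX xl']; first by rewrite (disjointFr dXY xX) in xY.
    by case: (off_pair x l' (or_introl xX) xl' l'i l'j).
  + case: (eqVneq l j) => [-> xY xX|lj xl xX]; first by rewrite (disjointFr dXY xX) in xY.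
    by case: (off_pair x l (or_introl xX) xl li lj).
  + case: (eqVneq l j) => [->|lj]; case: (eqVneq l' j) => [->|l'j] // xl xl'.
    * by case: (off_pair x l' (or_intror xl) xl' l'i l'j).
    * by case: (off_pair x l (or_intror xl') xl li lj).
    * exact: disj xl xl'.
- move=> x; have [m xm] := cover x.
  case: (boolP ((m == i) || (m == j))) => [m_ij | /norP [mi mj]].
    have : x \in X :|: Y by rewrite XY inE; case/orP: m_ij => /eqP <-; rewrite xm ?orbT.
    rewrite inE => /orP [xX|xY]; first by exists i; rewrite replace_blocks_fst.
    by exists j; rewrite replace_blocks_snd.
  by exists m; rewrite replace_blocks_other.
Qed.

Section AdjacentBlocks.
Variables j0 j1 : 'I_k.
Hypothesis j1_succ : j1 = j0.+1 :> nat.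

Let merge i : nat := i - (i == j1 :> nat).

Let merge_mono i l : i <= l -> merge i <= merge l.
Proof.
by rewrite /merge; case: (eqVneq (i : nat) j1); case: (eqVneq (l : nat) j1) => /=; lia.
Qed.

Let merge_lt i l : merge i < merge l -> i < l.
Proof. by move=> lt; rewrite ltnNge; apply: contraL lt => /merge_mono; rewrite -leqNgt. Qed.

Let merge_eq i l : i < l -> merge i = merge l -> i = j0 /\ l = j1.
Proof.
move=> il; rewrite /merge.
by case: (eqVneq (i : nat) j1); case: (eqVneq (l : nat) j1) => /= ? ? eq;
  split; apply: ord_inj; lia.
Qed.

Variables B B' : {ffun 'I_k -> {set 'I_N}}.
Hypothesis same_outside : forall l, l != j0 -> l != j1 -> B' l = B l.
Hypothesis same_union : B' j0 :|: B' j1 = B j0 :|: B j1.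
Hypothesis pair_dominated : forall u v, u \in B' j0 -> v \in B' j1 -> u < v ->
  exists u' v', [/\ u' \in B j0, v' \in B j1, u <= u', u' < v' & v' <= v].

Let block_of i b : b \in B' i -> exists2 i', b \in B i' & merge i' = merge i.
Proof.
move=> bi; case: (boolP ((i == j0) || (i == j1))) => [i_01 | /norP [ij0 ij1]].
  have : b \in B j0 :|: B j1.
    by rewrite -same_union inE; case/orP: i_01 => /eqP <-; rewrite bi ?orbT.
  by rewrite inE => /orP [b0|b1]; [exists j0 | exists j1];
    rewrite // /merge; case/orP: i_01 => /eqP ->; rewrite ?eqxx j1_succ ?eqSS /=; lia.
by exists i; rewrite -?same_outside.
Qed.

Let outside_pair i : j1 < i -> B' i = B i.
Proof. by move=> j1i; apply: same_outside; rewrite -val_eqE /=; lia. Qed.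

Let before_pair i : i < j0 -> B' i = B i.
Proof. by move=> ij0; apply: same_outside; rewrite -val_eqE /=; lia. Qed.

(* [merge] identifies the positions j0 and j1: an occurrence of 123 in B' whose
   three blocks stay distinct after merging transfers to B block by block, and
   otherwise two of its blocks are j0 and j1, where [pair_dominated] applies. *)
Lemma has123_merge : has123 B' -> has123 B.
Proof.
case=> i1 [i2 [i3 [b1 [b2 [b3 [/andP [i12 i23] /andP [b12 b23] [bi1 bi2 bi3]]]]]]].
case: (eqVneq (merge i1) (merge i2)) => [m12 | m12].
  have [? ?] := merge_eq i12 m12; subst i1 i2.
  have [u [v [u0 v1 b1u uv vb2]]] := pair_dominated bi1 bi2 b12.
  exists j0, j1, i3, u, v, b3; split; [apply/andP; lia.. | by split; rewrite // -outside_pair].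
case: (eqVneq (merge i2) (merge i3)) => [m23 | m23].
  have [? ?] := merge_eq i23 m23; subst i2 i3.
  have [u [v [u0 v1 b2u uv vb3]]] := pair_dominated bi2 bi3 b23.
  exists i1, j0, j1, b1, u, v; split; [apply/andP; lia.. | by split; rewrite // -before_pair].
have [i1' bi1' e1] := block_of bi1.
have [i2' bi2' e2] := block_of bi2.
have [i3' bi3' e3] := block_of bi3.
have merge_ltn i l : i < l -> merge i != merge l -> merge i < merge l.
  by move=> il ne; rewrite ltn_neqAle ne merge_mono // ltnW.
exists i1', i2', i3', b1, b2, b3; split; [apply/andP; split | by rewrite b12 | by []].
all: by apply: merge_lt; rewrite ?e1 e2 ?e3; apply: merge_ltn.
Qed.

End AdjacentBlocks.

Definition pair_at j B := [forall l, #|B l| == (if l == j then 2 else 1)].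

Lemma pair_atP j B :
  reflect (#|B j| = 2 /\ forall l, l != j -> #|B l| = 1) (pair_at j B).
Proof.
apply: (iffP forallP) => [sizes | [Bj2 others] l].
  split; first by have := sizes j; rewrite eqxx => /eqP.
  by move=> l lj; have := sizes l; rewrite (negbTE lj) => /eqP.
by case: (eqVneq l j) => [->|lj]; rewrite ?Bj2 ?others.
Qed.

Lemma pair_at_inj B j j' : pair_at j B -> pair_at j' B -> j = j'.
Proof.
case/pair_atP => Bj2 _ /pair_atP [_ others].
by case: (eqVneq j j') => // jj'; rewrite others in Bj2.
Qed.

Lemma osp_pair_at B : N = k.+1 -> is_osp B -> exists j, pair_at j B.
Proof.
move=> Nk osp; have /is_ospP [nonempty _ _] := osp.
have size_pos l : 0 < #|B l| by rewrite card_gt0.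
have : \sum_l (#|B l| - 1) = 1.
  have : \sum_l (#|B l| - 1 + 1) = N.
    by rewrite -[RHS](osp_card_sum osp); apply: eq_bigr => l _; rewrite subnK.
  by rewrite big_split sum_nat_const card_ord muln1 /=; lia.
case/sum_nat_eq1 => j excess; exists j; apply/forallP => l.
by have := excess l; have := size_pos l; case: (l == j) => /=; lia.
Qed.

Definition avoiders_pair_at j :=
  [set B | [&& is_osp B, osp_avoids B p123 & pair_at j B]].

Lemma op_pair_at_sum : N = k.+1 -> op N k p123 = \sum_j #|avoiders_pair_at j|.
Proof.
move=> Nk; rewrite /op -card_bigcup_disjoint; last first.
  move=> j j' B; rewrite !inE => /and3P [_ _ Bj] /and3P [_ _ Bj'].
  exact: pair_at_inj Bj Bj'.
apply: eq_card => B; rewrite inE; apply/idP/bigcupP => [/andP [osp avoid] | [j _]].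
  by have [j Bj] := osp_pair_at Nk osp; exists j; rewrite // inE osp avoid.
by rewrite inE => /and3P [-> ->].
Qed.

Section MovePair.
Variables j0 j1 : 'I_k.
Hypothesis j1_succ : j1 = j0.+1 :> nat.

Let j0_neq_j1 : j0 != j1.
Proof. by rewrite -val_eqE /=; lia. Qed.

(* Shifting ranks by 2 makes every increasing pair across the new blocks j0, j1
   dominated by the pair (p, c) across the old ones, so no 123 is created. *)
Definition raise_pair B :=
  if [pick c in B j1] is Some c then
    let U := B j0 :|: B j1 in let p := rotate U 2 c in
    replace_blocks B j0 j1 [set p] (U :\ p)
  else B.

Definition lower_pair B :=
  if [pick p in B j0] is Some p then
    let U := B j0 :|: B j1 in let c := rotate U 1 p in
    replace_blocks B j0 j1 (U :\ c) [set c]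
  else B.

Lemma raise_pairE B c U : B j1 = [set c] -> U = B j0 :|: B j1 ->
  raise_pair B = replace_blocks B j0 j1 [set rotate U 2 c] (U :\ rotate U 2 c).
Proof. by move=> Bc ->; rewrite /raise_pair {1}Bc pick_set1. Qed.

Lemma lower_pairE B p U : B j0 = [set p] -> U = B j0 :|: B j1 ->
  lower_pair B = replace_blocks B j0 j1 (U :\ rotate U 1 p) [set rotate U 1 p].
Proof. by move=> Bp ->; rewrite /lower_pair {1}Bp pick_set1. Qed.

Lemma raise_pair_in B :
  B \in avoiders_pair_at j0 -> raise_pair B \in avoiders_pair_at j1.
Proof.
rewrite !inE => /and3P [osp avoid /pair_atP [B0_2 single]].
have /cards1P [c Bc] : #|B j1| == 1 by rewrite single // eq_sym.
set U := B j0 :|: B j1; rewrite (raise_pairE Bc (erefl U)); set p := rotate U 2 c.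
have U3 : #|U| = 3 by rewrite osp_card_setU // B0_2 single // eq_sym.
have cU : c \in U by rewrite inE Bc set11 orbT.
have [pU rank_p] := rotate_spec 2 cU; rewrite -/p U3 in pU rank_p.
have Up2 : #|U :\ p| = 2 by have := U3; rewrite (cardsD1 p) pU => -[].
have rank_c := rank_lt_card cU; rewrite U3 in rank_c.
have pc : p != c by apply/eqP => pc; rewrite pc in rank_p; lia.
apply/and3P; split.
- apply: replace_blocks_osp => //; first by rewrite setD1K.
  + by rewrite disjoints1 setD11.
  + by apply/set0Pn; exists p; rewrite set11.
  + by rewrite -card_gt0 Up2.
- apply/negP => /contains123P new123; move/negP: avoid; apply; apply/contains123P.
  apply: (has123_merge j1_succ _ _ _ new123).
  + by move=> l l0 l1; rewrite replace_blocks_other.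
  + by rewrite replace_blocks_fst replace_blocks_snd // setD1K.
  move=> u v; rewrite replace_blocks_fst replace_blocks_snd // in_set1 in_setD1.
  move=> /eqP -> /andP [vp vU] pv; exists p, c.
  have rank_v := rank_lt_card vU; rewrite U3 in rank_v.
  rewrite -(rank_ltE pU vU) in pv.
  split => //.
  + by move: pU; rewrite !inE Bc in_set1 (negbTE pc) orbF.
  + by rewrite Bc set11.
  + by rewrite -(rank_ltE pU cU); lia.
  + by rewrite -(rank_leE cU vU); move: vp; rewrite -(inj_in_eq (@rank_inj _ U)) //; lia.
- apply/pair_atP; split; first by rewrite replace_blocks_snd.
  move=> l lj1; case: (eqVneq l j0) => [->|lj0]; first by rewrite replace_blocks_fst cards1.
  by rewrite replace_blocks_other // single.
Qed.

Lemma lower_pair_in B :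
  B \in avoiders_pair_at j1 -> lower_pair B \in avoiders_pair_at j0.
Proof.
rewrite !inE => /and3P [osp avoid /pair_atP [B1_2 single]].
have /cards1P [p Bp] : #|B j0| == 1 by rewrite single.
set U := B j0 :|: B j1; rewrite (lower_pairE Bp (erefl U)); set c := rotate U 1 p.
have U3 : #|U| = 3 by rewrite osp_card_setU // single // B1_2.
have pU : p \in U by rewrite inE Bp set11.
have [cU rank_c] := rotate_spec 1 pU; rewrite -/c U3 in cU rank_c.
have Uc2 : #|U :\ c| = 2 by have := U3; rewrite (cardsD1 c) cU => -[].
have rank_p := rank_lt_card pU; rewrite U3 in rank_p.
have cp : c != p by apply/eqP => cp; rewrite cp in rank_c; lia.
apply/and3P; split.
- apply: replace_blocks_osp => //; first by rewrite setUC setD1K.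
  + by rewrite disjoint_sym disjoints1 setD11.
  + by rewrite -card_gt0 Uc2.
  + by apply/set0Pn; exists c; rewrite set11.
- apply/negP => /contains123P new123; move/negP: avoid; apply; apply/contains123P.
  apply: (has123_merge j1_succ _ _ _ new123).
  + by move=> l l0 l1; rewrite replace_blocks_other.
  + by rewrite replace_blocks_fst replace_blocks_snd // setUC setD1K.
  move=> u v; rewrite replace_blocks_fst replace_blocks_snd // in_setD1 in_set1.
  move=> /andP [uc uU] /eqP -> uc_lt; exists p, c.
  have rank_u := rank_lt_card uU; rewrite U3 in rank_u.
  rewrite -(rank_ltE uU cU) in uc_lt.
  split => //.
  + by rewrite Bp set11.
  + by move: cU; rewrite !inE Bp in_set1 (negbTE cp).
  + by rewrite -(rank_leE uU pU); lia.
  + by rewrite -(rank_ltE pU cU); lia.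
- apply/pair_atP; split; first by rewrite replace_blocks_fst.
  move=> l lj0; case: (eqVneq l j1) => [->|lj1].
    by rewrite replace_blocks_snd // cards1.
  by rewrite replace_blocks_other // single.
Qed.

Lemma raise_pairK : {in avoiders_pair_at j0, cancel raise_pair lower_pair}.
Proof.
move=> B; rewrite inE => /and3P [osp _ /pair_atP [B0_2 single]].
have /cards1P [c Bc] : #|B j1| == 1 by rewrite single // eq_sym.
set U := B j0 :|: B j1; rewrite (raise_pairE Bc (erefl U)).
have U3 : #|U| = 3 by rewrite osp_card_setU // B0_2 single // eq_sym.
have cU : c \in U by rewrite inE Bc set11 orbT.
have [pU _] := rotate_spec 2 cU.
rewrite (lower_pairE (replace_blocks_fst _ _ _ _ _) (erefl _)) replace_blocks_fst.
rewrite replace_blocks_snd // setD1K // rotateK ?U3 // replace_blocks_replace.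
have cB0 : c \notin B j0.
  case/is_ospP: osp => _ disj _; apply: contraNN j0_neq_j1 => cB0.
  by apply/eqP; apply: disj cB0 _; rewrite Bc set11.
by rewrite /U Bc setUC setU1K // -Bc replace_blocks_id.
Qed.

Lemma lower_pairK : {in avoiders_pair_at j1, cancel lower_pair raise_pair}.
Proof.
move=> B; rewrite inE => /and3P [osp _ /pair_atP [B1_2 single]].
have /cards1P [p Bp] : #|B j0| == 1 by rewrite single.
set U := B j0 :|: B j1; rewrite (lower_pairE Bp (erefl U)).
have U3 : #|U| = 3 by rewrite osp_card_setU // single // B1_2.
have pU : p \in U by rewrite inE Bp set11.
have [cU _] := rotate_spec 1 pU.
rewrite (raise_pairE (replace_blocks_snd _ _ _ j0_neq_j1) (erefl _)) replace_blocks_fst.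
rewrite replace_blocks_snd // setUC setD1K // rotateK ?U3 // replace_blocks_replace.
have pB1 : p \notin B j1.
  case/is_ospP: osp => _ disj _; apply: contraNN j0_neq_j1 => pB1.
  by apply/eqP; apply: disj _ pB1; rewrite Bp set11.
by rewrite /U Bp setU1K // -Bp replace_blocks_id.
Qed.

Lemma card_avoiders_pair_at_succ :
  #|avoiders_pair_at j0| = #|avoiders_pair_at j1|.
Proof.
rewrite -(card_in_imset (can_in_inj raise_pairK)); apply: eq_card => B.
apply/imsetP/idP => [[B' B'_in ->] | B_in]; first exact: raise_pair_in.
by exists (lower_pair B); [exact: lower_pair_in | rewrite lower_pairK].
Qed.

End MovePair.

End OrderedSetPartitions.

Lemma card_avoiders_pair_at N k (j : 'I_k.+1) :
  #|avoiders_pair_at N j| = #|avoiders_pair_at N (@ord0 k)|.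
Proof.
case: j => j; elim: j => [|j IH] jk; first by congr #|avoiders_pair_at _ _|; apply: ord_inj.
by rewrite -(IH (ltnW jk)); symmetry; apply: card_avoiders_pair_at_succ.
Qed.

Lemma op_sizesE (bs : seq nat) N k m (rho : {perm 'I_m}) :
  size bs = k -> sumn bs = N ->
  op_sizes bs rho = #|[set B : {ffun 'I_k -> {set 'I_N}} |
    [&& is_osp B, osp_avoids B rho & [forall i, #|B i| == nth 0 bs i]]]|.
Proof. by move=> <- <-. Qed.

Theorem corollary1 (n : nat) : 2 <= n ->
  op n (n - 1) p123 = (n - 1) * op_sizes (2 :: nseq (n - 2) 1) p123.
Proof.
case: n => [|[|m]] // _; rewrite !subSS !subn0.
rewrite (op_pair_at_sum (erefl m.+2)).
rewrite (eq_bigr _ (fun j _ => card_avoiders_pair_at m.+2 j)) sum_nat_const card_ord.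
rewrite (@op_sizesE _ m.+2 m.+1); last 2 first.
- by rewrite /= size_nseq.
- by rewrite /= sumn_nseq mul1n add2n.
congr (_ * _); apply: eq_card => B; rewrite !inE; congr [&& _, _ & _].
by apply: eq_forallb => -[[|l] lm]; rewrite //= nth_nseq -ltnS lm.
Qed.
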